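(* Let $\theta>0$ and consider the Softplus network $a^{(0)}=x$, $z^{(l)}=b^{(l)}+W^{(l)}a^{(l-1)}$, $a^{(l)}=\sigma_\theta(z^{(l)})$ with $\sigma_\theta(z)=\theta\log(1+e^{z/\theta})$. Assume $\gamma^{(l)}_i>0$ for all $l,i$. Fix $m\ge1$, a neuron $j$ of layer $m$, a label $q$, and $u=s^{(m)}_{j,q}$. Then for every $0\le l\le m$ and neuron $i$ of layer $l$, $\partial a^{(m)}_j/\partial a^{(l)}_i=\xi_{q,+}\bigl(\Gamma^\theta_u(s^{(l)}_{i,+})-\Gamma^\theta_u(s^{(l)}_{i,-})\bigr)$, where $\partial a^{(m)}_j/\partial a^{(l)}_i=[D^{(m)}W^{(m)}\cdots D^{(l+1)}W^{(l+1)}]_{ji}$ with $D^{(l')}=\mathrm{diag}(\sigma'_\theta(z^{(l')}))$.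
   Context: $\sigma'_\theta(z)=1/(1+e^{-z/\theta})$. $W^{(l,\pm)}=(W^{(l)})^\pm$ entrywise ($u^\pm=\max(\pm u,0)$). Labels $r,r',q\in\{+,-\}$; $r\oplus r'=+$ if $r=r'$, else $-$; $\xi_{q,+}=1$ if $q=+$, $-1$ if $q=-$. Soft Stopping-Game chain: states $s^{(l)}_{i,r}$ ($0\le l\le L$) plus a cemetery $\perp$. From $s^{(l)}_{i,r}$ with $l\ge1$: with probability $1-\sigma'_\theta(z^{(l)}_i)$ go to $\perp$; with probability $\sigma'_\theta(z^{(l)}_i)\,W^{(l,r\oplus r')}_{ih}/\gamma^{(l)}_i$ go to $s^{(l-1)}_{h,r'}$, where $\gamma^{(l)}_i=\sum_h|W^{(l)}_{ih}|$, and such a continuation carries discount factor $\gamma^{(l)}_i$. Layer-0 states and $\perp$ are terminal. For a trajectory $\tau$ from $\tau_0=u$, $d_0=1$ and $d_t$ is the product of the discount factors of the continuations taken before time $t$. $\Gamma^\theta_u(v)=\mathbb{E}[\sum_t d_t\mathbf 1\{\tau_t=v\}]$. *)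

From HB Require Import structures.
From mathcomp Require Import all_boot all_order all_algebra.
From mathcomp Require Import all_classical all_reals all_analysis.
Set Implicit Arguments. Unset Strict Implicit. Unset Printing Implicit Defensive.
Import Order.TTheory GRing.Theory Num.Theory.
Local Open Scope ring_scope.

(* Labels r in {+,-} are encoded as bool: true = +, false = -. *)
Definition lab_xor (r r' : bool) : bool := r == r'.
Definition xi (q : bool) {R : numDomainType} : R := if q then 1 else -1.

Section SoftplusNet.
Variable R : realType.
Variable theta : R.
(* widths: layer l has neurons 0 .. n l - 1 *)
Variable n : nat -> nat.
(* W l i h = W^{(l)}_{ih}, for 1 <= l, i < n l, h < n (l-1) ; b l i = b^{(l)}_i *)
Variable W : nat -> nat -> nat -> R.
Variable b : nat -> nat -> R.
Variable x : nat -> R.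

Definition softplus (t : R) : R := theta * ln (1 + expR (t / theta)).
Definition dsoftplus (t : R) : R := 1 / (1 + expR (- t / theta)).

Fixpoint act (l : nat) : nat -> R :=
  match l with
  | 0 => x
  | l'.+1 => fun i => softplus (b l'.+1 i + \sum_(h < n l') W l'.+1 i h * act l' h)
  end.

Definition preact (l i : nat) : R := b l i + \sum_(h < n l.-1) W l i h * act l.-1 h.

Definition Wpm (l : nat) (r : bool) (i h : nat) : R :=
  if r then Num.max (W l i h) 0 else Num.max (- W l i h) 0.

Definition gamma (l i : nat) : R := \sum_(h < n l.-1) `|W l i h|.

Fixpoint jac (m l : nat) : nat -> nat -> R :=
  match m with
  | 0 => fun j i => (j == i)%:R
  | m'.+1 => fun j i =>
      if l == m'.+1 then (j == i)%:R
      else \sum_(k < n m') dsoftplus (preact m'.+1 j) * W m'.+1 j k * jac m' l k i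
  end.

(* States of the Soft Stopping-Game chain *)
Inductive state : Type := Cem | St of nat & nat & bool.

Definition state_eqb (s s' : state) : bool :=
  match s, s' with
  | Cem, Cem => true
  | St l i r, St l' i' r' => [&& l == l', i == i' & r == r']
  | _, _ => false
  end.

(* visit v t s = E_s[ d_t 1{tau_t = v} ]  (expectation over trajectories started at s),
   computed by conditioning on the first step (Markov property).  Terminal states
   (layer 0 and the cemetery) end the trajectory, so tau_t is undefined for later t. *)
Fixpoint visit (v : state) (t : nat) (s : state) : R :=
  match t with
  | 0 => (state_eqb s v)%:R
  | t'.+1 =>
      match s with
      | Cem => 0
      | St 0 _ _ => 0
      | St l'.+1 i r =>
          (1 - dsoftplus (preact l'.+1 i)) * visit v t' Cem
          + \sum_(h < n l') \sum_(r' : bool)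
              (dsoftplus (preact l'.+1 i) * Wpm l'.+1 (lab_xor r r') i h / gamma l'.+1 i)
              * gamma l'.+1 i * visit v t' (St l' h r')
      end
  end.

Definition Gam (u v : state) : R := limn (fun N => \sum_(t < N) visit v t u).

End SoftplusNet.

From HB Require Import structures.
From mathcomp Require Import all_boot all_order all_algebra.
From mathcomp Require Import all_classical all_reals all_analysis.
From mathcomp Require Import ring.
Import Order.TTheory GRing.Theory Num.Theory.
Local Open Scope ring_scope.

(* Every continuation of the chain goes down exactly one layer, so from
   s^(m)_{j,q} the layer-l states can only be visited at time m - l and
   Gamma_u(s^(l)_{i,r}) is the single term E[d_{m-l} 1{tau_{m-l} = s^(l)_{i,r}}].
   The discount gamma cancels the 1/gamma in the transition probability, so one
   step from s^(l+1)_{j,q} weights s^(l)_{h,r'} by sigma'(z_j) W^(l+1,q(+)r')_{jh}.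
   Since W^+ - W^- = W, the signed difference of the visits to s^(l)_{i,+} and
   s^(l)_{i,-} satisfies the backward recursion of the Jacobian, up to xi_q. *)

Lemma xi_mulK {R : numDomainType} (q : bool) : xi q * xi q = 1 :> R.
Proof. by case: q; rewrite /xi ?mulrNN mulr1. Qed.

Lemma max0_subr_maxN0 {R : realDomainType} (w : R) :
  Num.max w 0 - Num.max (- w) 0 = w.
Proof. by rewrite -[in Num.max (- w) 0]oppr0 oppr_max !opprK addr_max_min addr0. Qed.

Section SoftStoppingGame.
Variables (R : realType) (theta : R) (n : nat -> nat)
  (W : nat -> nat -> nat -> R) (b : nat -> nat -> R) (x : nat -> R).

Lemma sum_Wpm_xi l q i h :
  \sum_(r : bool) Wpm W l (lab_xor q r) i h * xi r = xi q * W l i h.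
Proof.
rewrite big_bool /lab_xor /xi -[W l i h]max0_subr_maxN0.
by case: q; rewrite /= mulr1 mulrN1 ?mul1r // mulN1r opprB.
Qed.

Lemma Wpm_divfK l r i h : (h < n l.-1)%N ->
  Wpm W l r i h / gamma n W l i * gamma n W l i = Wpm W l r i h.
Proof.
move=> lt_h; have [gamma0|gamma_neq0] := eqVneq (gamma n W l i) 0; last by rewrite divfK.
have /normr0_eq0 W0 : `|W l i h| = 0.
  by apply: (psumr_eq0P (fun _ _ => normr_ge0 _) gamma0 (i := Ordinal lt_h)).
by rewrite gamma0 mulr0 /Wpm W0 oppr0 maxxx; case: r.
Qed.

Lemma visit_Cem l i r t : visit theta n W b x (St l i r) t Cem = 0.
Proof. by case: t. Qed.

Lemma visit_St_eq0 l i r t m j q : (t + l != m)%N ->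
  visit theta n W b x (St l i r) t (St m j q) = 0.
Proof.
elim: t m j q => [|t IHt] [|m] j q; rewrite ?add0n => ne_lm //=.
1,2: by rewrite eq_sym (negbTE ne_lm).
rewrite visit_Cem mulr0 add0r big1 // => h _.
by rewrite big1 // => r' _; rewrite IHt ?mulr0.
Qed.

Lemma visit_St_succ l i r t m j q :
  visit theta n W b x (St l i r) t.+1 (St m.+1 j q)
  = \sum_(h < n m) \sum_(r' : bool) dsoftplus theta (preact theta n W b x m.+1 j)
      * Wpm W m.+1 (lab_xor q r') j h * visit theta n W b x (St l i r) t (St m h r').
Proof.
rewrite /= visit_Cem mulr0 add0r; apply: eq_bigr => h _; apply: eq_bigr => r' _.
by rewrite -(mulrA _ (Wpm _ _ _ _ _)) -(mulrA _ (_ / _)) Wpm_divfK.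
Qed.

Lemma jac_id l j i : jac theta n W b x l l j i = (j == i)%:R.
Proof. by case: l => //= l; rewrite eqxx. Qed.

Lemma jac_succ m l j i : (l <= m)%N ->
  jac theta n W b x m.+1 l j i = \sum_(k < n m)
    dsoftplus theta (preact theta n W b x m.+1 j) * W m.+1 j k * jac theta n W b x m l k i.
Proof. by move=> le_lm /=; rewrite ltn_eqF. Qed.

Lemma visit_sub_jac l i d j q :
  visit theta n W b x (St l i true) d (St (l + d) j q)
  - visit theta n W b x (St l i false) d (St (l + d) j q)
  = xi q * jac theta n W b x (l + d) l j i.
Proof.
elim: d j q => [|d IHd] j q.
  rewrite addn0 jac_id /= !eqxx /=.
  by case: q; case: (j == i); rewrite /xi /= ?subr0 ?sub0r ?mulr1 ?mulr0 ?oppr0.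
rewrite addnS !visit_St_succ jac_succ ?leq_addr // -sumrB mulr_sumr.
apply: eq_bigr => h _; rewrite -sumrB.
under eq_bigr do rewrite -mulrBr IHd.
move: (dsoftplus _ _) (jac _ _ _ _ _ _ _ h i) => ds J.
rewrite (_ : xi q * _ = xi q * W (l + d).+1 j h * (ds * J)); last by ring.
by rewrite -sum_Wpm_xi mulr_suml; apply: eq_bigr => r _; ring.
Qed.

Lemma Gam_St_visit m j q l i r : (l <= m)%N ->
  Gam theta n W b x (St m j q) (St l i r)
  = visit theta n W b x (St l i r) (m - l) (St m j q).
Proof.
move=> le_lm; apply: norm_lim_near_cst; near=> N.
have lt_N : (m - l < N)%N by near: N; exists (m - l).+1.
rewrite (bigD1 (Ordinal lt_N)) //= big1 ?addr0 // => t ne_t.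
apply: visit_St_eq0; apply: contra ne_t => /eqP tl_m.
by apply/eqP/val_inj; rewrite /= -tl_m addnK.
Unshelve. all: by end_near.
Qed.

End SoftStoppingGame.

Theorem mainTheorem7 (R : realType) (theta : R) (L : nat) (n : nat -> nat)
  (W : nat -> nat -> nat -> R) (b : nat -> nat -> R) (x : nat -> R) :
  0 < theta ->
  (forall l i, (1 <= l <= L)%N -> (i < n l)%N -> 0 < gamma n W l i) ->
  forall (m j : nat) (q : bool), (1 <= m <= L)%N -> (j < n m)%N ->
  let u := St m j q in
  forall l i, (l <= m)%N -> (i < n l)%N ->
    jac theta n W b x m l j i
    = xi q * (Gam theta n W b x u (St l i true) - Gam theta n W b x u (St l i false)).
Proof.
move=> _ _ m j q _ _ u l i le_lm _.
rewrite /u !Gam_St_visit // -{1 3 5}(subnKC le_lm) visit_sub_jac.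
by rewrite mulrA xi_mulK mul1r.
Qed.
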